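(* Consider the two-layer multi-item order fulfillment problem described in the context with a single FDC ($K=1$), fixed costs $f_0\ge f_1\ge 0$, and variable costs satisfying $a\le c_{k,t}^i\le b$ for constants $b>a>0$. For parameters $\eta\ge1$, $\theta\ge0$, let \textsc{Order-Size AdjV-Priority} be the following policy. In each period $t$, for each item $i$, set $\hat m_{1,t}^i=\min\{S_t^i,I_{1,t-1}^i\}$ if $c_{1,t}^i<c_{0,t}^i/\eta$ and $\hat m_{1,t}^i=0$ otherwise, and $\hat m_{0,t}^i=S_t^i-\hat m_{1,t}^i$. If $\sum_{i=1}^nS_t^i\le\theta$ and $I_{1,t-1}^i\ge S_t^i$ for all $i\in[n]$, fulfill the whole order from the FDC ($m_{1,t}^i=S_t^i$, $m_{0,t}^i=0$); otherwise set $m_{k,t}^i=\hat m_{k,t}^i$. If $\eta=\sqrt{\max\{f_0/2,\,b\}/a}$ and $\theta=\frac{f_0}{2a\eta}$, then \[\mathfrak R(\textsc{Order-Size AdjV-Priority})\le(4+\sqrt2)\sqrt{\frac{\max\{f_0/2,\ b\}}{a}}.\]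
   Context: Problem with one FDC (index $1$) and one RDC (index $0$, unlimited inventory). The FDC initially holds $I_{1,0}^i\ge0$ units of item $i\in[n]$, never replenished. In periods $t=1,\dots,T$ an order $\boldsymbol S_t=(S_t^i)_i$ of nonnegative integers arrives; after observing it and the variable costs $c_{k,t}^i$, the policy must immediately and irrevocably choose $m_{0,t}^i,m_{1,t}^i\ge0$ with $m_{0,t}^i+m_{1,t}^i=S_t^i$ and $m_{1,t}^i\le I_{1,t-1}^i$, where $I_{1,t}^i=I_{1,0}^i-\sum_{\tau\le t}m_{1,\tau}^i$. Period cost $\sum_{k=0,1}[f_k\mathbb{I}(\sum_im_{k,t}^i>0)+\sum_ic_{k,t}^im_{k,t}^i]$; total cost is the sum over periods. Online policies decide in period $t$ using only fixed costs, initial inventories and orders/variable costs up to $t$ (and the known constants $a,b$). $\mathrm{ALG}(I)$: (expected) total cost; $\mathrm{OPT}(I)$: offline optimal total cost. $\mathfrak R(\mathrm{ALG})$ is the supremum of $\mathrm{ALG}(I)/\mathrm{OPT}(I)$ over all $n,T$, initial inventories, variable costs in $[a,b]$ and order sequences. *)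

From HB Require Import structures.
From mathcomp Require Import all_boot all_order all_algebra.
From mathcomp Require Import reals.
Set Implicit Arguments. Unset Strict Implicit. Unset Printing Implicit Defensive.
Import Order.TTheory GRing.Theory Num.Theory.
Local Open Scope ring_scope.

(* Periods are t = 0, ..., T-1 (paper's t = 1..T shifted by one).  A fulfillment plan is a pair (m0, m1) of functions
   nat -> 'I_n -> nat: m0 t i units of item i shipped from the RDC (index 0),
   m1 t i units shipped from the FDC (index 1) in period t. *)

Section Model.
Variables (R : realType) (n : nat).

Definition period_cost (f0 f1 : R) (c0 c1 : nat -> 'I_n -> R)
    (m0 m1 : nat -> 'I_n -> nat) (t : nat) : R :=
  (if (0 < \sum_(i < n) m0 t i)%N then f0 else 0)
  + \sum_(i < n) c0 t i * (m0 t i)%:R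
  + ((if (0 < \sum_(i < n) m1 t i)%N then f1 else 0)
  + \sum_(i < n) c1 t i * (m1 t i)%:R).

Definition total_cost (T : nat) (f0 f1 : R) (c0 c1 : nat -> 'I_n -> R)
    (m0 m1 : nat -> 'I_n -> nat) : R :=
  \sum_(t < T) period_cost f0 f1 c0 c1 m0 m1 t.

(* feasibility: every order is fully served, and the FDC never ships more
   than its remaining inventory I_{1,t-1} = I0 - sum_{s<t} m1 s, i.e.
   cumulative FDC shipments never exceed the initial inventory. *)
Definition feasible (T : nat) (I0 : 'I_n -> nat) (Sd : nat -> 'I_n -> nat)
    (m0 m1 : nat -> 'I_n -> nat) : Prop :=
  forall t i, (t < T)%N ->
    (m0 t i + m1 t i = Sd t i)%N /\ (\sum_(s < t.+1) m1 s i <= I0 i)%N.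

Definition offline_optimal (T : nat) (f0 f1 : R) (c0 c1 : nat -> 'I_n -> R)
    (I0 : 'I_n -> nat) (Sd : nat -> 'I_n -> nat) (m0 m1 : nat -> 'I_n -> nat)
    : Prop :=
  feasible T I0 Sd m0 m1 /\
  forall m0' m1', feasible T I0 Sd m0' m1' ->
    total_cost T f0 f1 c0 c1 m0 m1 <= total_cost T f0 f1 c0 c1 m0' m1'.

(* Order-Size AdjV-Priority: FDC shipment in period t given the current
   FDC inventory inv = I_{1,t-1}. *)
Definition osadjv_m1 (eta theta : R) (c0 c1 : nat -> 'I_n -> R)
    (Sd : nat -> 'I_n -> nat) (t : nat) (inv : 'I_n -> nat) (i : 'I_n) : nat :=
  if ((\sum_(j < n) Sd t j)%:R <= theta) && [forall j, (Sd t j <= inv j)%N]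
  then Sd t i
  else if c1 t i < c0 t i / eta then minn (Sd t i) (inv i) else 0%N.

(* FDC inventory at the start of period t under the policy (I_{1,t-1}) *)
Fixpoint osadjv_inv (eta theta : R) (c0 c1 : nat -> 'I_n -> R)
    (Sd : nat -> 'I_n -> nat) (I0 : 'I_n -> nat) (t : nat) : 'I_n -> nat :=
  match t with
  | 0 => I0
  | t'.+1 => fun i =>
      (osadjv_inv eta theta c0 c1 Sd I0 t' i
       - osadjv_m1 eta theta c0 c1 Sd t' (osadjv_inv eta theta c0 c1 Sd I0 t') i)%N
  end.

Definition alg_m1 (eta theta : R) (c0 c1 : nat -> 'I_n -> R)
    (Sd : nat -> 'I_n -> nat) (I0 : 'I_n -> nat) (t : nat) (i : 'I_n) : nat :=
  osadjv_m1 eta theta c0 c1 Sd t (osadjv_inv eta theta c0 c1 Sd I0 t) i.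

Definition alg_m0 (eta theta : R) (c0 c1 : nat -> 'I_n -> R)
    (Sd : nat -> 'I_n -> nat) (I0 : 'I_n -> nat) (t : nat) (i : 'I_n) : nat :=
  (Sd t i - alg_m1 eta theta c0 c1 Sd I0 t i)%N.

Definition alg_cost (eta theta : R) (T : nat) (f0 f1 : R)
    (c0 c1 : nat -> 'I_n -> R) (I0 : 'I_n -> nat) (Sd : nat -> 'I_n -> nat) : R :=
  total_cost T f0 f1 c0 c1 (alg_m0 eta theta c0 c1 Sd I0)
    (alg_m1 eta theta c0 c1 Sd I0).

End Model.

From HB Require Import structures.
From mathcomp Require Import all_boot all_order all_algebra.
From mathcomp Require Import reals.
From mathcomp Require Import ring lra zify.
Import Order.TTheory GRing.Theory Num.Theory.
Set Implicit Arguments. Unset Strict Implicit. Unset Printing Implicit Defensive.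
Local Open Scope ring_scope.

(* Compare the policy with any feasible offline plan item by item.  Whenever
   the policy ships from the FDC units that the offline plan does not, it
   builds up a credit; the offline plan can later out-ship the policy from the
   FDC only by spending that credit, since both start from the same inventory.
   Valuing a credit unit at b + f0, one shows in every period that

     ALG_t + (b + f0) (credit earned) <= (1 + 3 eta) OPT_t + (b + f0) (credit spent),

   and credit spent never exceeds credit earned, so ALG <= (1 + 3 eta) OPT.
   In a period, an item shipped from the FDC only when c1 < c0 / eta costs at
   most eta times the offline cost; the RDC setup f0 of the policy is paid by
   the offline RDC setup, by 2 eta times the offline FDC variable cost when the
   order exceeds theta, or by spent credit when the FDC ran short; and an order
   of size at most theta served entirely from the FDC costs at most
   (2 b + f0) theta <= 2 eta f0 more than the offline plan.  The choice
   eta^2 a = max (f0 / 2, b) makes all of these hold, and 1 + 3 eta is at most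
   (4 + sqrt 2) eta. *)

Definition credit (x y : nat -> nat) (t : nat) : nat :=
  (\sum_(s < t) x s - \sum_(s < t) y s)%N.

Lemma credit_add_spent_le_earned (x y : nat -> nat) (T : nat) :
  (credit x y T + \sum_(t < T) minn (credit x y t) (y t - x t)
   <= \sum_(t < T) (x t - y t))%N.
Proof.
elim: T => [|T IH]; first by rewrite /credit !big_ord0.
move: IH; rewrite /credit !big_ord_recr /=.
set X := (\sum_(s < T) x s)%N; set Y := (\sum_(s < T) y s)%N.
set w := (\sum_(t < T) minn _ _)%N; set v := (\sum_(t < T) (x t - y t))%N.
by clearbody X Y w v; lia.
Qed.

Lemma sum_spent_le_sum_earned {R : realType} {n : nat} (T : nat) (x y : nat -> 'I_n -> nat) :
  \sum_(t < T) \sum_i (minn (credit (x^~ i) (y^~ i) t) (y t i - x t i))%:R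
  <= \sum_(t < T) \sum_i (x t i - y t i)%:R :> R.
Proof.
rewrite exchange_big [X in _ <= X]exchange_big /=; apply: ler_sum => i _.
rewrite -!natr_sum ler_nat.
exact: leq_trans (leq_addl _ _) (credit_add_spent_le_earned _ _ T).
Qed.

Lemma osadjv_m1_le_inv {R : realType} {n : nat} (eta theta : R) c0 c1 Sd t
    (inv : 'I_n -> nat) i :
  (osadjv_m1 eta theta c0 c1 Sd t inv i <= inv i)%N.
Proof.
rewrite /osadjv_m1; case: ifP => [/andP[_ /forallP]|_]; first exact.
by case: ifP => _ //; exact: geq_minr.
Qed.

Lemma osadjv_m1_le_order {R : realType} {n : nat} (eta theta : R) c0 c1 Sd t
    (inv : 'I_n -> nat) i :
  (osadjv_m1 eta theta c0 c1 Sd t inv i <= Sd t i)%N.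
Proof.
rewrite /osadjv_m1; case: ifP => // _; case: ifP => _ //; exact: geq_minl.
Qed.

Lemma osadjv_inv_add_sum_m1 {R : realType} {n : nat} (eta theta : R) c0 c1 Sd
    (I0 : 'I_n -> nat) t i :
  (osadjv_inv eta theta c0 c1 Sd I0 t i
   + \sum_(s < t) alg_m1 eta theta c0 c1 Sd I0 s i = I0 i)%N.
Proof.
elim: t => [|t IH]; first by rewrite big_ord0 addn0.
rewrite big_ord_recr /= [(_ + alg_m1 _ _ _ _ _ _ _ _)%N]addnC addnA subnK //.
exact: osadjv_m1_le_inv.
Qed.

Lemma m1_le_credit_add_osadjv_inv {R : realType} {n T : nat} (eta theta : R) c0 c1 Sd
    (I0 : 'I_n -> nat) m0 m1 t i :
  feasible T I0 Sd m0 m1 -> (t < T)%N ->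
  (m1 t i <= credit ((alg_m1 eta theta c0 c1 Sd I0)^~ i) (m1^~ i) t
             + osadjv_inv eta theta c0 c1 Sd I0 t i)%N.
Proof.
move=> feas tT; have [_] := feas t i tT; rewrite big_ord_recr /= /credit.
move: (osadjv_inv_add_sum_m1 eta theta c0 c1 Sd I0 t i).
move: (osadjv_inv _ _ _ _ _ _ _ _) (\sum_(s < t) alg_m1 _ _ _ _ _ _ s i)%N.
by move: (\sum_(s < t) m1 s i)%N; clear; lia.
Qed.

Definition setup_cost {R : realType} (f : R) (q : nat) : R := if (0 < q)%N then f else 0.

Section AdjVPriority.
Variables (R : realType) (f0 f1 a b eta theta : R).
Hypotheses (f1_ge0 : 0 <= f1) (f1_le_f0 : f1 <= f0) (a_gt0 : 0 < a) (a_le_b : a <= b)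
  (eta_ge1 : 1 <= eta) (b_le_eta2a : b <= eta ^+ 2 * a)
  (f0_le_eta2a : f0 <= 2 * (eta ^+ 2 * a)) (thetaE : 2 * a * eta * theta = f0).

Let eta_gt0 : 0 < eta. Proof. by apply: lt_le_trans eta_ge1. Qed.
Let f0_ge0 : 0 <= f0. Proof. exact: le_trans f1_ge0 f1_le_f0. Qed.
Let b_gt0 : 0 < b. Proof. exact: lt_le_trans a_gt0 a_le_b. Qed.

Let two_a_eta_gt0 : 0 < 2 * a * eta.
Proof. by rewrite !mulr_gt0. Qed.

Let theta_ge0 : 0 <= theta.
Proof. by rewrite -(pmulr_rge0 theta two_a_eta_gt0) thetaE. Qed.

Let theta_le_eta : theta <= eta.
Proof.
rewrite -(ler_pM2l two_a_eta_gt0) thetaE.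
by have := f0_le_eta2a; rewrite expr2; lra.
Qed.

Let b_theta_le : 2 * b * theta <= eta * f0.
Proof.
have := b_le_eta2a; rewrite -thetaE expr2 => h.
have := theta_ge0; have := eta_gt0; nra.
Qed.

Definition adjv_m1 (c0 c1 : R) (S inv : nat) : nat :=
  if c1 < c0 / eta then minn S inv else 0%N.

Lemma item_cost_le (c0 c1 : R) (S inv y0 y1 P : nat) :
  a <= c0 <= b -> a <= c1 <= b -> (y0 + y1 = S)%N -> (y1 <= P + inv)%N ->
  c0 * (S - adjv_m1 c0 c1 S inv)%:R + c1 * (adjv_m1 c0 c1 S inv)%:R
    + (b + f0) * (adjv_m1 c0 c1 S inv - y1)%:R
  <= (1 + 3 * eta) * (c0 * y0%:R) + (1 + eta) * (c1 * y1%:R)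
     + b * (minn P (y1 - adjv_m1 c0 c1 S inv))%:R.
Proof.
move=> /andP[c0_ge c0_le] /andP[c1_ge c1_le] ySE y1_le.
have SE : S%:R = y0%:R + y1%:R :> R by rewrite -ySE natrD.
have c0_gt0 : 0 < c0 := lt_le_trans a_gt0 c0_ge.
have c1_gt0 : 0 < c1 := lt_le_trans a_gt0 c1_ge.
have A0_ge0 : 0 <= c0 * y0%:R by rewrite mulr_ge0 // ltW.
have A1_ge0 : 0 <= c1 * y1%:R by rewrite mulr_ge0 // ltW.
have eta_A0_ge0 : 0 <= eta * (c0 * y0%:R) by rewrite mulr_ge0 // ltW.
have eta_A1_ge0 : 0 <= eta * (c1 * y1%:R) by rewrite mulr_ge0 // ltW.
have bW_ge0 m : 0 <= b * m%:R by rewrite mulr_ge0 // ltW.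
rewrite /adjv_m1; case: ifP => [c1_lt | /negbT]; last first.
  rewrite -leNgt ler_pdivrMr // mulrC => c0_le_eta_c1.
  rewrite !subn0 sub0n !mulr0 !addr0 SE.
  have : c0 * y1%:R <= eta * c1 * y1%:R by rewrite ler_wpM2r.
  have := bW_ge0 (minn P y1); lra.
rewrite ltr_pdivlMr // mulrC in c1_lt.
have [y1_le_x | x_lt_y1] := leqP y1 (minn S inv).
- (* each surplus FDC unit displaces an offline RDC unit, which costs c0 > eta * a *)
  have x_le_S : (minn S inv <= S)%N := geq_minl S inv.
  rewrite !natrB // SE.
  move: y1_le_x x_le_S (bW_ge0 (minn P (y1 - minn S inv))); rewrite -!(ler_nat R) SE.
  set X := (minn S inv)%:R => y1_le_X X_le bW_x_ge0.
  have K_le : b + f0 <= 3 * eta * c0.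
    have eta_a_le : eta * a <= eta * c1 by rewrite ler_wpM2l // ltW.
    have : eta * (eta * a) <= eta * c0 by rewrite ler_wpM2l ?(ltW eta_gt0) //; lra.
    by have := b_le_eta2a; have := f0_le_eta2a; rewrite expr2; lra.
  have : (b + f0) * (X - y1%:R) <= 3 * eta * c0 * y0%:R.
    apply: le_trans (_ : 3 * eta * c0 * (X - y1%:R) <= _).
      by rewrite ler_wpM2r // subr_ge0.
    by apply: ler_wpM2l; [rewrite !mulr_ge0 // ltW | lra].
  have : 0 <= (c0 - c1) * (X - y1%:R).
    have c1_le_eta_c1 : c1 <= eta * c1 by rewrite ler_peMl // ltW.
    by apply: mulr_ge0; rewrite subr_ge0 //; lra.
  lra.
- have [-> -> -> inv_le_S inv_le_y1] : [/\ minn S inv = inv,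
      minn P (y1 - inv) = (y1 - inv)%N, (inv - y1 = 0)%N, (inv <= S)%N & (inv <= y1)%N].
    by move: x_lt_y1 ySE y1_le; clear => *; split; lia.
  rewrite !natrB // SE mulr0 addr0.
  move: inv_le_y1; rewrite -(ler_nat R) => inv_le_y1.
  have : c0 * (y1%:R - inv%:R) <= b * (y1%:R - inv%:R) by rewrite ler_wpM2r // subr_ge0.
  have : c1 * inv%:R <= c1 * y1%:R by rewrite ler_wpM2l // ltW.
  lra.
Qed.

Definition plan_cost {n : nat} (c0 c1 : 'I_n -> R) (z0 z1 : 'I_n -> nat) : R :=
  setup_cost f0 (\sum_i z0 i) + \sum_i c0 i * (z0 i)%:R
  + (setup_cost f1 (\sum_i z1 i) + \sum_i c1 i * (z1 i)%:R).

Lemma setup_cost_ge0 (f : R) (q : nat) : 0 <= f -> 0 <= setup_cost f q.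
Proof. by rewrite /setup_cost; case: ifP. Qed.

Lemma plan_cost_ge0 (n : nat) (c0 c1 : 'I_n -> R) (z0 z1 : 'I_n -> nat) :
  (forall i, 0 <= c0 i /\ 0 <= c1 i) -> 0 <= plan_cost c0 c1 z0 z1.
Proof.
move=> c_ge0; have cz_ge0 (c : 'I_n -> R) (z : 'I_n -> nat) :
   (forall i, 0 <= c i) -> 0 <= \sum_i c i * (z i)%:R.
  by move=> ?; apply: sumr_ge0 => i _; rewrite mulr_ge0.
rewrite /plan_cost !addr_ge0 ?setup_cost_ge0 ?cz_ge0 // => i; by case: (c_ge0 i).
Qed.

Lemma fdc_setup_le (n : nat) (z y0 y1 : 'I_n -> nat) :
  (forall i, z i <= y0 i + y1 i)%N ->
  setup_cost f1 (\sum_i z i) <= setup_cost f0 (\sum_i y0 i) + setup_cost f1 (\sum_i y1 i).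
Proof.
move=> z_le; rewrite {1}/setup_cost; case: ifP => [z_gt0|_]; last first.
  by rewrite addr_ge0 // setup_cost_ge0.
have : (0 < \sum_i y0 i + \sum_i y1 i)%N.
  by rewrite -big_split; apply: leq_trans z_gt0 _; apply: leq_sum.
rewrite addn_gt0 /setup_cost => /orP[->|->].
  by case: ifP => _; rewrite ?addr0 // ler_wpDr.
by rewrite lerDr; case: ifP.
Qed.

Lemma excess_le_setup_cost (Y : nat) :
  Y%:R <= theta -> (2 * b + f0) * Y%:R <= 2 * eta * setup_cost f0 Y.
Proof.
rewrite /setup_cost; case: ifP => [_ Y_le | ]; last first.
  by rewrite lt0n => /negbFE/eqP ->; rewrite !mulr0.
have : (2 * b + f0) * Y%:R <= (2 * b + f0) * theta.
  by rewrite ler_wpM2l // addr_ge0 // mulr_ge0 // ltW.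
have : f0 * theta <= f0 * eta by rewrite ler_wpM2l.
have := b_theta_le; lra.
Qed.

Section Period.
Variables (n : nat) (c0 c1 : nat -> 'I_n -> R) (Sd : nat -> 'I_n -> nat) (t : nat).
Variables (inv y0 y1 P : 'I_n -> nat).
Hypotheses (c_bounds : forall i, a <= c0 t i <= b /\ a <= c1 t i <= b)
  (y_split : forall i, (y0 i + y1 i = Sd t i)%N)
  (y1_le_credit : forall i, (y1 i <= P i + inv i)%N).

Local Notation S := (Sd t).
Local Notation x := (osadjv_m1 eta theta c0 c1 Sd t inv).
Let small_order := ((\sum_j S j)%:R <= theta) && [forall j, (S j <= inv j)%N].

Let c0_ge i : a <= c0 t i. Proof. by case: (c_bounds i) => /andP[]. Qed.
Let c1_ge i : a <= c1 t i. Proof. by case: (c_bounds i) => _ /andP[]. Qed.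

Let var_cost_ge0 (c : 'I_n -> R) (z : 'I_n -> nat) :
  (forall i, a <= c i) -> 0 <= \sum_i c i * (z i)%:R.
Proof.
by move=> c_ge; apply: sumr_ge0 => i _; rewrite mulr_ge0 // (le_trans (ltW a_gt0)).
Qed.

Lemma period_cost_le_small_order : small_order ->
  plan_cost (c0 t) (c1 t) (fun i => S i - x i)%N x + (b + f0) * \sum_i (x i - y1 i)%:R
  <= (1 + 3 * eta) * plan_cost (c0 t) (c1 t) y0 y1
     + (b + f0) * \sum_i (minn (P i) (y1 i - x i))%:R.
Proof.
move=> small; have xE i : x i = S i by rewrite /osadjv_m1 -/small_order small.
rewrite /plan_cost.
have -> : (\sum_i (S i - x i) = 0)%N by apply: big1 => i _; rewrite xE subnn.
have -> : \sum_i c0 t i * (S i - x i)%:R = 0 by apply: big1 => i _; rewrite xE subnn mulr0.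
have -> : \sum_i (x i - y1 i)%:R = (\sum_i y0 i)%:R :> R.
  by rewrite natr_sum; apply: eq_bigr => i _; rewrite xE -y_split addnK.
set Y := (\sum_i y0 i)%:R; set F0y := setup_cost f0 (\sum_i y0 i).
set F1y := setup_cost f1 (\sum_i y1 i); set W := \sum_i (minn _ _)%:R.
set A0 := \sum_i c0 t i * _; set A1 := \sum_i c1 t i * (y1 i)%:R.
have G1_le : setup_cost f1 (\sum_i x i) <= F0y + F1y.
  by apply: fdc_setup_le => i; rewrite xE y_split.
have V1_le : \sum_i c1 t i * (x i)%:R <= A1 + b * Y.
  rewrite /Y natr_sum mulr_sumr -big_split; apply: ler_sum => i _.
  rewrite xE -y_split natrD mulrDr addrC lerD2l ler_wpM2r //.
  by case: (c_bounds i) => _ /andP[].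
have Y_le : Y <= theta.
  move: small => /andP[S_le _]; apply: le_trans S_le.
  by rewrite ler_nat; apply: leq_sum => i _; rewrite -y_split leq_addr.
have : (2 * b + f0) * Y <= 2 * eta * F0y := excess_le_setup_cost Y_le.
have eta_ge0 : 0 <= eta by exact: ltW.
have : 0 <= eta * F0y by apply: mulr_ge0 => //; exact: setup_cost_ge0.
have : 0 <= eta * F1y by apply: mulr_ge0 => //; exact: setup_cost_ge0.
have : 0 <= A0 by exact: var_cost_ge0.
have : 0 <= A1 by exact: var_cost_ge0.
have : 0 <= eta * A0 by apply: mulr_ge0 => //; exact: var_cost_ge0.
have : 0 <= eta * A1 by apply: mulr_ge0 => //; exact: var_cost_ge0.
have : 0 <= (b + f0) * W by apply: mulr_ge0; [rewrite addr_ge0 // ltW | exact: sumr_ge0].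
have -> : setup_cost f0 0 = 0 by [].
lra.
Qed.

Lemma osadjv_m1_large_order :
  ~~ small_order -> forall i, x i = adjv_m1 (c0 t i) (c1 t i) (S i) (inv i).
Proof. by move=> /negbTE large i; rewrite /osadjv_m1 -/small_order large. Qed.

Lemma rdc_setup_le_large_order : ~~ small_order ->
  setup_cost f0 (\sum_i (S i - x i)) <= setup_cost f0 (\sum_i y0 i)
    + 2 * eta * \sum_i c1 t i * (y1 i)%:R + f0 * \sum_i (minn (P i) (y1 i - x i))%:R.
Proof.
move=> large.
have eta_A1_ge0 : 0 <= 2 * eta * \sum_i c1 t i * (y1 i)%:R.
  by rewrite mulr_ge0 ?var_cost_ge0 // mulr_ge0 // ltW.
have f0_W_ge0 : 0 <= f0 * \sum_i (minn (P i) (y1 i - x i))%:R by rewrite mulr_ge0 ?sumr_ge0.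
rewrite {1}/setup_cost; case: ifP => _; last by rewrite !addr_ge0 ?setup_cost_ge0.
rewrite /setup_cost; case: ifP => [_|]; first by lra.
move/negbT; rewrite add0r -eqn0Ngt sum_nat_eq0 => /forallP y0_eq0.
have y1E i : y1 i = S i by rewrite -y_split (eqP (y0_eq0 i)).
have [S_gt|S_le] := ltrP theta (\sum_j S j)%:R.
- suff : f0 <= 2 * eta * \sum_i c1 t i * (y1 i)%:R by lra.
  have aS_le : a * (\sum_j S j)%:R <= \sum_i c1 t i * (y1 i)%:R.
    by rewrite natr_sum mulr_sumr; apply: ler_sum => i _; rewrite y1E ler_wpM2r.
  have : 2 * a * eta * theta <= 2 * a * eta * (\sum_j S j)%:R.
    by rewrite ler_wpM2l ?ltW.
  have : 2 * eta * (a * (\sum_j S j)%:R) <= 2 * eta * \sum_i c1 t i * (y1 i)%:R.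
    by rewrite ler_wpM2l // mulr_ge0 // ltW.
  rewrite -thetaE; lra.
- have [j inv_lt_S] : exists j, ~~ (S j <= inv j)%N.
    by apply/forallPn; move: large; rewrite /small_order S_le.
  suff : 1 <= \sum_i (minn (P i) (y1 i - x i))%:R :> R.
    move=> W_ge1; have : f0 * 1 <= f0 * \sum_i (minn (P i) (y1 i - x i))%:R.
      by rewrite ler_wpM2l.
    lra.
  rewrite -natr_sum ler1n (bigD1 j) //= addn_gt0; apply/orP; left.
  move: inv_lt_S (osadjv_m1_le_inv eta theta c0 c1 Sd t inv j) (y1_le_credit j) (y1E j).
  by clear; lia.
Qed.

Lemma var_cost_le_large_order : ~~ small_order ->
  \sum_i c0 t i * (S i - x i)%:R + \sum_i c1 t i * (x i)%:R
    + (b + f0) * \sum_i (x i - y1 i)%:R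
  <= (1 + 3 * eta) * \sum_i c0 t i * (y0 i)%:R + (1 + eta) * \sum_i c1 t i * (y1 i)%:R
     + b * \sum_i (minn (P i) (y1 i - x i))%:R.
Proof.
move=> large; rewrite !mulr_sumr -!big_split; apply: ler_sum => i _ /=.
rewrite osadjv_m1_large_order //; apply: item_cost_le; [ | | exact: y_split | exact: y1_le_credit].
all: by case: (c_bounds i).
Qed.

Lemma period_cost_le :
  plan_cost (c0 t) (c1 t) (fun i => S i - x i)%N x + (b + f0) * \sum_i (x i - y1 i)%:R
  <= (1 + 3 * eta) * plan_cost (c0 t) (c1 t) y0 y1
     + (b + f0) * \sum_i (minn (P i) (y1 i - x i))%:R.
Proof.
have [small|large] := boolP small_order; first exact: period_cost_le_small_order.
have G0_le := rdc_setup_le_large_order large.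
have G1_le : setup_cost f1 (\sum_i x i)
    <= setup_cost f0 (\sum_i y0 i) + setup_cost f1 (\sum_i y1 i).
  by apply: fdc_setup_le => i; rewrite y_split osadjv_m1_le_order.
have := var_cost_le_large_order large; rewrite /plan_cost.
move: G0_le G1_le.
set F0y := setup_cost f0 (\sum_i y0 i); set F1y := setup_cost f1 (\sum_i y1 i).
set A0 := \sum_i c0 t i * (y0 i)%:R; set A1 := \sum_i c1 t i * (y1 i)%:R.
set W := \sum_i (minn _ _)%:R => G0_le G1_le.
have eta_ge0 : 0 <= eta by exact: ltW.
have : 0 <= (eta - 1) * F0y by apply: mulr_ge0; [rewrite subr_ge0 | exact: setup_cost_ge0].
have : 0 <= (eta - 1) * F1y by apply: mulr_ge0; [rewrite subr_ge0 | exact: setup_cost_ge0].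
have : 0 <= F0y by exact: setup_cost_ge0.
have : 0 <= F1y by exact: setup_cost_ge0.
lra.
Qed.

End Period.

Section Horizon.
Variables (n T : nat) (I0 : 'I_n -> nat) (c0 c1 : nat -> 'I_n -> R) (Sd : nat -> 'I_n -> nat).
Hypothesis c_bounds : forall t i, (t < T)%N -> a <= c0 t i <= b /\ a <= c1 t i <= b.

Lemma total_cost_ge0 (m0 m1 : nat -> 'I_n -> nat) : 0 <= total_cost T f0 f1 c0 c1 m0 m1.
Proof.
apply: sumr_ge0 => t _; apply: plan_cost_ge0 => i.
have [/andP[c0_ge _] /andP[c1_ge _]] := c_bounds i (ltn_ord t).
by split; apply: le_trans (ltW a_gt0) _.
Qed.

Lemma alg_cost_le (m0 m1 : nat -> 'I_n -> nat) : feasible T I0 Sd m0 m1 ->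
  alg_cost eta theta T f0 f1 c0 c1 I0 Sd <= (1 + 3 * eta) * total_cost T f0 f1 c0 c1 m0 m1.
Proof.
move=> feas.
set x := alg_m1 eta theta c0 c1 Sd I0.
pose P t i := credit (x^~ i) (m1^~ i) t.
have period_le t : (t < T)%N ->
    period_cost f0 f1 c0 c1 (alg_m0 eta theta c0 c1 Sd I0) x t
      + (b + f0) * \sum_i (x t i - m1 t i)%:R
    <= (1 + 3 * eta) * period_cost f0 f1 c0 c1 m0 m1 t
      + (b + f0) * \sum_i (minn (P t i) (m1 t i - x t i))%:R.
  move=> tT; apply: period_cost_le => i; first exact: c_bounds.
    by case: (feas t i tT).
  exact: m1_le_credit_add_osadjv_inv feas tT.
have : alg_cost eta theta T f0 f1 c0 c1 I0 Sd
    + (b + f0) * \sum_(t < T) \sum_i (x t i - m1 t i)%:R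
  <= (1 + 3 * eta) * total_cost T f0 f1 c0 c1 m0 m1
    + (b + f0) * \sum_(t < T) \sum_i (minn (P t i) (m1 t i - x t i))%:R.
  rewrite /alg_cost /total_cost !mulr_sumr -!big_split /=.
  by apply: ler_sum => t _; exact: period_le.
have : (b + f0) * \sum_(t < T) \sum_i (minn (P t i) (m1 t i - x t i))%:R
    <= (b + f0) * \sum_(t < T) \sum_i (x t i - m1 t i)%:R.
  by rewrite ler_wpM2l ?sum_spent_le_sum_earned // addr_ge0 // ltW.
lra.
Qed.

End Horizon.

End AdjVPriority.

Theorem theorem6 (R : realType) (f0 f1 a b : R) :
  0 <= f1 -> f1 <= f0 -> 0 < a -> a < b ->
  let eta := Num.sqrt (Num.max (f0 / 2) b / a) in
  let theta := f0 / (2 * a * eta) in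
  forall (n T : nat) (I0 : 'I_n -> nat) (c0 c1 : nat -> 'I_n -> R)
         (Sd : nat -> 'I_n -> nat),
  (forall t i, (t < T)%N ->
     a <= c0 t i <= b /\ a <= c1 t i <= b) ->
  forall (m0 m1 : nat -> 'I_n -> nat),
  offline_optimal T f0 f1 c0 c1 I0 Sd m0 m1 ->
  alg_cost eta theta T f0 f1 c0 c1 I0 Sd
    <= (4 + Num.sqrt 2) * Num.sqrt (Num.max (f0 / 2) b / a)
       * total_cost T f0 f1 c0 c1 m0 m1.
Proof.
move=> f1_ge0 f1_le_f0 a_gt0 a_lt_b eta theta n T I0 c0 c1 Sd c_bounds m0 m1 [feas _].
set M := Num.max (f0 / 2) b.
have [f0_le_M b_le_M] : f0 / 2 <= M /\ b <= M by rewrite /M !le_max !lexx orbT.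
have eta2a : eta ^+ 2 * a = M.
  have M_ge0 : 0 <= M by lra.
  rewrite /eta -/M sqr_sqrtr; first by rewrite divfK // gt_eqF.
  by rewrite divr_ge0 // ltW.
have eta_ge1 : 1 <= eta.
  by rewrite /eta -/M -sqrtr1 ler_wsqrtr // ler_pdivlMr // mul1r; lra.
have thetaE : 2 * a * eta * theta = f0.
  by rewrite mulrC divfK // gt_eqF // !mulr_gt0 //; lra.
have b_le : b <= eta ^+ 2 * a by rewrite eta2a.
have f0_le : f0 <= 2 * (eta ^+ 2 * a) by rewrite eta2a; lra.
apply: le_trans (alg_cost_le f1_ge0 f1_le_f0 a_gt0 (ltW a_lt_b) eta_ge1 b_le f0_le thetaE
  c_bounds feas) _.
rewrite -/eta ler_wpM2r ?(total_cost_ge0 f1_ge0 f1_le_f0 a_gt0 c_bounds) //.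
have : 0 <= Num.sqrt 2 * eta by rewrite mulr_ge0 ?sqrtr_ge0 // (le_trans ler01).
lra.
Qed.
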